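(* Let $0<a<1$, $a_N=a\ln N/N$, and let $S=S(N)$ be integers with $N+S(N)\ge0$ and $S=o(N/\ln N)$. For integers $K\ge0$ let $\langle n_0\rangle_{K,a_N}$ denote the expectation of $n_0$ under the probability on sequences $(n_j)_{j\ge0}$ of nonnegative integers with $\sum_jn_j=K$ proportional to $e^{-a_N\sum_jjn_j}$. Then $$\lim_{N\to\infty}N^{-a}\langle n_0\rangle_{N+S,a_N}=1 .$$
   Context: This is the canonical ensemble of $N+S$ noninteracting bosons in a one-dimensional harmonic trap whose scaled level spacing parameter is $a_N$. *)

From HB Require Import structures.
From mathcomp Require Import all_boot all_order all_algebra.
From mathcomp Require Import all_classical all_reals all_analysis.
Unset Printing Implicit Defensive.
Import Order.TTheory GRing.Theory Num.Theory.
Import numFieldNormedType.Exports.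
Local Open Scope ring_scope.

(* Any
   configuration of energy E has n_j = 0 for j > E and n_j <= K, so the
   configurations of particle number K and energy E are exactly the finite
   functions n : 'I_E.+1 -> 'I_K.+1 (levels 0..E, occupations 0..K) with
   sum n = K and sum j n_j = E (extended by 0 beyond level E). *)
Definition config (K E : nat) (n : {ffun 'I_E.+1 -> 'I_K.+1}) : bool :=
  ((\sum_(j < E.+1) (n j : nat))%N == K) &&
  ((\sum_(j < E.+1) (j : nat) * (n j : nat))%N == E).

Definition ncfg (K E : nat) : nat := #|[pred n | config K E n]|.

Definition n0cfg (K E : nat) : nat :=
  (\sum_(n : {ffun 'I_E.+1 -> 'I_K.+1} | config K E n) (n ord0 : nat))%N.

(* canonical partition function Z_K(a) = sum over configurations of
   exp(-a * sum_j j n_j), summed energy shell by energy shell *)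
Definition Zcan {R : realType} (K : nat) (a : R) : R :=
  limn (fun M => \sum_(0 <= E < M) ((ncfg K E)%:R * expR (- a * E%:R))).

Definition N0can {R : realType} (K : nat) (a : R) : R :=
  limn (fun M => \sum_(0 <= E < M) ((n0cfg K E)%:R * expR (- a * E%:R))).

Definition mean_n0 {R : realType} (K : nat) (a : R) : R := N0can K a / Zcan K a.

From HB Require Import structures.
From mathcomp Require Import all_boot all_order all_algebra.
From mathcomp Require Import all_classical all_reals all_analysis.
From mathcomp Require Import zify ring lra.
Import Order.TTheory GRing.Theory Num.Theory.
Import numFieldNormedType.Exports.
Local Open Scope classical_set_scope.
Local Open Scope ring_scope.

(* Split the configurations by whether level 0 is occupied (remove one ground
   particle) or empty (lower every particle by one level).  With q = e^{-x}
   this gives, for the canonical partition function Z_K and the unnormalised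
   moment N0_K of n_0,
     Z_{K+1} = Z_K + q^{K+1} Z_{K+1}   and   N0_{K+1} = N0_K + Z_K,
   so g_K = <n_0>_{K,x} solves g_0 = 0, g_{K+1} = (1 - q^{K+1}) (1 + g_K).
   This recursion yields q^K g_K <= 1 - q^K and, comparing with the recursion
   started L steps before K, (q^L - q^K) (1 - (1 - q^K)^L) <= q^K g_K.
   Choosing L ~ 1/(d t) with t = q^K = e^{-xK} squeezes t g_K to within 4d
   of 1 once t <= d and x <= d^2 t.  For x = a ln N / N and K = N + S we have
   xK = a ln N + u with u = a S ln N / N -> 0, hence N^{-a} = e^u t,
   t = e^{-u} N^{-a} -> 0 and x / t = a ln N N^{a-1} e^u -> 0 since a < 1. *)

Section Configurations.

Variables D M : nat.
Implicit Types n : {ffun 'I_D -> 'I_M}.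

Definition npart n : nat := (\sum_(j < D) (n j : nat))%N.
Definition energy n : nat := (\sum_(j < D) (j : nat) * (n j : nat))%N.

End Configurations.

Arguments npart {D M} n.
Arguments energy {D M} n.

Definition ncfg_on (D K E : nat) : nat :=
  #|[pred n : {ffun 'I_D -> 'I_K.+1} | (npart n == K) && (energy n == E)]|.

Lemma ncfg_on_sum1 D K E :
  ncfg_on D K E = (\sum_(n : {ffun 'I_D -> 'I_K.+1} | (npart n == K) && (energy n == E)) 1)%N.
Proof. by rewrite sum1_card. Qed.

Lemma ncfgE K E : ncfg K E = ncfg_on E.+1 K E.
Proof. by []. Qed.

Section InsertEmptyLevel.

Variables D K : nat.
Implicit Types (p : 'I_D.+1) (m : {ffun 'I_D -> 'I_K.+1}) (n : {ffun 'I_D.+1 -> 'I_K.+1}).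

Definition insert_empty p m : {ffun 'I_D.+1 -> 'I_K.+1} :=
  [ffun j => if unlift p j is Some i then m i else ord0].

Definition remove_level p n : {ffun 'I_D -> 'I_K.+1} := [ffun i => n (lift p i)].

Lemma insert_empty_lift p m i : insert_empty p m (lift p i) = m i.
Proof. by rewrite ffunE liftK. Qed.

Lemma insert_empty_at p m : insert_empty p m p = ord0.
Proof. by rewrite ffunE unlift_none. Qed.

Lemma insert_emptyK p : cancel (insert_empty p) (remove_level p).
Proof. by move=> m; apply/ffunP => i; rewrite ffunE insert_empty_lift. Qed.

Lemma remove_levelK p n : n p = ord0 -> insert_empty p (remove_level p n) = n.
Proof.
move=> np0; apply/ffunP => j; rewrite ffunE.
by case: unliftP => [i ->|->]; rewrite ?ffunE.
Qed.

Lemma npart_insert_empty p m : npart (insert_empty p m) = npart m.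
Proof.
rewrite /npart (bigD1_ord p) //= insert_empty_at add0n.
by apply: eq_bigr => i _; rewrite insert_empty_lift.
Qed.

Lemma energy_insert_empty_top m : energy (insert_empty ord_max m) = energy m.
Proof.
rewrite /energy (bigD1_ord ord_max) //= insert_empty_at muln0 add0n.
by apply: eq_bigr => i _; rewrite insert_empty_lift /= /bump leqNgt ltn_ord.
Qed.

Lemma energy_insert_empty_ground m :
  energy (insert_empty ord0 m) = (energy m + npart m)%N.
Proof.
rewrite /energy /npart (bigD1_ord ord0) //= insert_empty_at muln0 add0n -big_split.
by apply: eq_bigr => i _; rewrite insert_empty_lift /= /bump leq0n add1n mulSn addnC.
Qed.

End InsertEmptyLevel.

Arguments insert_empty {D K} p m.
Arguments remove_level {D K} p n.

Lemma ncfg_on_widen D K E : (E < D)%N -> ncfg_on D.+1 K E = ncfg_on D K E.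
Proof.
move=> ltED; rewrite !ncfg_on_sum1 (reindex (insert_empty ord_max)).
  by apply: eq_bigl => m; rewrite npart_insert_empty energy_insert_empty_top.
exists (remove_level ord_max) => [m _|n]; first exact: insert_emptyK.
rewrite inE => /andP[_ /eqP enE]; apply: remove_levelK; apply: val_inj => /=.
have : (D * n ord_max <= E)%N by rewrite -enE /energy (bigD1_ord ord_max) //= leq_addr.
by case: (n ord_max : nat) => // k; rewrite mulnS; lia.
Qed.

Lemma ncfg_on_levels D K E : (E < D)%N -> ncfg_on D K E = ncfg_on E.+1 K E.
Proof.
elim: D => // D IH; rewrite ltnS leq_eqVlt => /predU1P[<- // | ltED].
by rewrite ncfg_on_widen // IH.
Qed.

Lemma sum1_ground_empty D K E :
  (\sum_(n : {ffun 'I_D.+1 -> 'I_K.+1} |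
      (npart n == K) && (energy n == E) && ((n ord0 : nat) == 0%N)) 1 =
   \sum_(m : {ffun 'I_D -> 'I_K.+1} | (npart m == K) && (energy m + K == E)) 1)%N.
Proof.
rewrite (reindex (insert_empty ord0)).
  apply: eq_bigl => m; rewrite npart_insert_empty energy_insert_empty_ground.
  by rewrite insert_empty_at andbT; case: eqP => // ->.
exists (remove_level ord0) => [m _|n]; first exact: insert_emptyK.
by rewrite inE => /andP[_ /eqP n0]; apply: remove_levelK; apply: val_inj.
Qed.

Section AddGroundParticle.

Variables D K : nat.
Implicit Types (m : {ffun 'I_D.+1 -> 'I_K.+1}) (n : {ffun 'I_D.+1 -> 'I_K.+2}).

Definition add_ground m : {ffun 'I_D.+1 -> 'I_K.+2} :=
  [ffun j => inord (m j + (j == ord0))].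

Definition remove_ground n : {ffun 'I_D.+1 -> 'I_K.+1} :=
  [ffun j => inord (n j - (j == ord0))].

Lemma add_groundE m j : add_ground m j = (m j + (j == ord0))%N :> nat.
Proof. by rewrite ffunE inordK //; have := ltn_ord (m j); case: (j == ord0) => /=; lia. Qed.

Lemma npart_add_ground m : npart (add_ground m) = (npart m).+1.
Proof.
rewrite /npart !big_ord_recl add_groundE eqxx addn1 addSn; congr (_ + _)%N.+1.
by apply: eq_bigr => i _; rewrite add_groundE addn0.
Qed.

Lemma energy_add_ground m : energy (add_ground m) = energy m.
Proof.
rewrite /energy; apply: eq_bigr => j _; rewrite add_groundE.
by case: (eqVneq j ord0) => [->|_]; rewrite ?mul0n ?addn0.
Qed.

Lemma add_groundK : cancel add_ground remove_ground.
Proof.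
move=> m; apply/ffunP => j; apply: val_inj.
by rewrite ffunE /= add_groundE addnK inordK.
Qed.

Lemma remove_groundK n :
  npart n = K.+1 -> (0 < n ord0)%N -> add_ground (remove_ground n) = n.
Proof.
move=> nK n0; apply/ffunP => j; apply: val_inj => /=; rewrite add_groundE ffunE inordK.
  by case: (eqVneq j ord0) => [->|_]; rewrite ?subn0 ?addn0 // subnK.
case: (eqVneq j ord0) => [->|j0] /=; first by have := ltn_ord (n ord0); lia.
have : (n j + n ord0 <= npart n)%N by rewrite /npart (bigD1 ord0) // (bigD1 j) //= addnA addnC leq_addr.
lia.
Qed.

End AddGroundParticle.

Arguments add_ground {D K} m.

Lemma sum_ground_occupied D K E (F : {ffun 'I_D.+1 -> 'I_K.+2} -> nat) :
  (\sum_(n | (npart n == K.+1) && (energy n == E) && (0 < n ord0)%N) F n =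
   \sum_(m : {ffun 'I_D.+1 -> 'I_K.+1} | (npart m == K) && (energy m == E))
      F (add_ground m))%N.
Proof.
rewrite (reindex add_ground).
  apply: eq_bigl => m; rewrite npart_add_ground energy_add_ground add_groundE.
  by rewrite eqxx addn1 andbT eqSS.
exists (@remove_ground D K) => [m _|n]; first exact: add_groundK.
by rewrite inE => /andP[/andP[/eqP nK _] n0]; apply: remove_groundK.
Qed.

Lemma ncfgS K E :
  ncfg K.+1 E = (ncfg K E + (if (K < E)%N then ncfg K.+1 (E - K.+1) else 0))%N.
Proof.
rewrite (ncfgE K.+1 E) (ncfgE K E) ncfg_on_sum1 [in RHS]/ncfg_on.
rewrite (bigID (fun n : {ffun 'I_E.+1 -> 'I_K.+2} => 0 < n ord0)%N) /=.
rewrite (sum_ground_occupied _ _ _ (fun=> 1%N)) sum1_card; congr (_ + _)%N.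
under eq_bigl => n do rewrite lt0n negbK.
rewrite sum1_ground_empty; case: ltnP => [ltKE|leEK].
  rewrite (ncfgE K.+1) -(@ncfg_on_levels E); last lia.
  by rewrite ncfg_on_sum1; apply: eq_bigl => m; case: (npart m == K.+1) => //=; apply/eqP/eqP; lia.
by apply: big_pred0 => m; case: (npart m == K.+1) => //=; apply/eqP; lia.
Qed.

Lemma n0cfgS K E : n0cfg K.+1 E = (n0cfg K E + ncfg K E)%N.
Proof.
rewrite /n0cfg (ncfgE K E) ncfg_on_sum1.
rewrite (bigID (fun n : {ffun 'I_E.+1 -> 'I_K.+2} => 0 < n ord0)%N) /=.
rewrite [X in (_ + X)%N]big1 ?addn0; last first.
  by move=> n /andP[_]; rewrite -leqNgt leqn0 => /eqP.
rewrite (sum_ground_occupied _ _ _ (fun n => n ord0 : nat)) -big_split /=.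
by apply: eq_bigr => m _; rewrite add_groundE eqxx addn1.
Qed.

Lemma ncfg0 E : ncfg 0 E = (E == 0)%N.
Proof.
have occ0 (n : {ffun 'I_E.+1 -> 'I_1}) j : (n j : nat) = 0%N by rewrite (ord1 (n j)).
rewrite (ncfgE 0 E) /ncfg_on (eq_card (B := [pred n | E == 0%N])); last first.
  move=> n; rewrite !inE /npart /energy !big1 ?eqxx // => j _; by rewrite occ0 ?muln0.
case: (E == 0%N); last exact: eq_card0.
rewrite (@eq_card _ _ {ffun 'I_E.+1 -> 'I_1}) //.
by rewrite card_ffun !card_ord exp1n.
Qed.

Lemma n0cfg0 E : n0cfg 0 E = 0%N.
Proof. by rewrite /n0cfg big1 // => n _; rewrite (ord1 (n ord0)). Qed.

Section PartitionFunctions.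

Variables (R : realType) (x : R).
Hypothesis x_gt0 : 0 < x.

Definition Zpart K M : R := \sum_(0 <= E < M) ((ncfg K E)%:R * expR (- x * E%:R)).
Definition N0part K M : R := \sum_(0 <= E < M) ((n0cfg K E)%:R * expR (- x * E%:R)).

Let weight_lt1 K : expR (- x * K.+1%:R) < 1.
Proof. by rewrite -expR0 ltr_expR mulNr oppr_lt0 mulr_gt0. Qed.

Lemma ZcanE K : Zcan K x = limn (Zpart K). Proof. by []. Qed.
Lemma N0canE K : N0can K x = limn (N0part K). Proof. by []. Qed.

Lemma Zpart_nondecreasing K : {homo Zpart K : n m / (n <= m)%N >-> n <= m}.
Proof.
move=> n m le_nm; rewrite /Zpart (big_cat_nat (leq0n n) le_nm) /= lerDl.
by apply: sumr_ge0 => E _; rewrite mulr_ge0 // expR_ge0.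
Qed.

Lemma ZpartS K M :
  Zpart K.+1 (M + K.+1) = Zpart K (M + K.+1) + expR (- x * K.+1%:R) * Zpart K.+1 M.
Proof.
rewrite /Zpart; under eq_bigr => E _ do rewrite ncfgS natrD mulrDl.
rewrite big_split /=; congr (_ + _).
rewrite (@big_cat_nat _ _ _ K.+1) ?leq_addl //= big_nat_cond big1 ?add0r; last first.
  by move=> E /andP[/andP[_ ltEK] _]; rewrite ifF ?mul0r //; lia.
rewrite (big_addn 0 (M + K.+1) K.+1) addnK mulr_sumr; apply: eq_bigr => E _.
by rewrite ifT ?addnK ?natrD ?mulrDr ?expRD; [ring | lia].
Qed.

Lemma Zpart0_cvg : Zpart 0 @ \oo --> (1 : R).
Proof.
rewrite -(cvg_shiftn 1); apply: cvg_near_cst; near=> M.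
rewrite /= /Zpart addn1 big_nat_recl // ncfg0 /= mulr0 expR0 mulr1.
by rewrite big1 ?addr0 // => E _; rewrite ncfg0 mul0r.
Unshelve. all: by end_near.
Qed.

Lemma Zpart_cvg K : cvgn (Zpart K).
Proof.
elim: K => [|K IH]; first by apply/cvg_ex; exists 1; apply: Zpart0_cvg.
apply: nondecreasing_is_cvgn; first exact: Zpart_nondecreasing.
set q := expR (- x * K.+1%:R); have q_lt1 : q < 1 := weight_lt1 K.
exists (limn (Zpart K) / (1 - q)) => _ [M _ <-].
have := ZpartS K M; rewrite -/q.
have : Zpart K.+1 M <= Zpart K.+1 (M + K.+1) by apply: Zpart_nondecreasing; apply: leq_addr.
have : Zpart K (M + K.+1) <= limn (Zpart K).
  by apply: nondecreasing_cvgn_le => //; apply: Zpart_nondecreasing.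
have : 0 <= q by apply: expR_ge0.
rewrite ler_pdivlMr ?subr_gt0 //; nra.
Qed.

Lemma ZcanS K : (1 - expR (- x * K.+1%:R)) * Zcan K.+1 x = Zcan K x.
Proof.
set q := expR (- x * K.+1%:R).
have shifted : (fun M => Zpart K.+1 (M + K.+1)) @ \oo --> limn (Zpart K.+1).
  by rewrite cvg_shiftn; apply: Zpart_cvg.
have split : (fun M => Zpart K (M + K.+1) + q * Zpart K.+1 M) @ \oo -->
    limn (Zpart K) + q * limn (Zpart K.+1).
  apply: cvgD; last exact: cvgMl_tmp (Zpart_cvg _).
  by rewrite (cvg_shiftn K.+1 (Zpart K)); apply: Zpart_cvg.
rewrite -(funext (ZpartS K)) in split.
have : limn (Zpart K.+1) = limn (Zpart K) + q * limn (Zpart K.+1).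
  exact: cvg_unique shifted split.
by rewrite !ZcanE mulrBl mul1r; lra.
Qed.

Lemma Zcan_gt0 K : 0 < Zcan K x.
Proof.
elim: K => [|K IH].
  by rewrite ZcanE (cvg_lim _ Zpart0_cvg).
by rewrite -(pmulr_rgt0 _ (_ : 0 < 1 - expR (- x * K.+1%:R))) ?ZcanS // subr_gt0 weight_lt1.
Qed.

Lemma N0partS K M : N0part K.+1 M = N0part K M + Zpart K M.
Proof.
by rewrite /N0part /Zpart -big_split; apply: eq_bigr => E _; rewrite n0cfgS natrD mulrDl.
Qed.

Lemma N0part0 : N0part 0 = 0.
Proof. by apply/funext => M; rewrite /N0part big1 // => E _; rewrite n0cfg0 mul0r. Qed.

Lemma N0part_cvg K : cvgn (N0part K).
Proof.
elim: K => [|K IH]; first by rewrite N0part0; apply: is_cvg_cst.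
by rewrite (funext (N0partS K)); apply: is_cvgD => //; apply: Zpart_cvg.
Qed.

Lemma N0canS K : N0can K.+1 x = N0can K x + Zcan K x.
Proof.
rewrite !N0canE ZcanE.
have -> : N0part K.+1 = N0part K + Zpart K by apply/funext => M; rewrite N0partS.
by rewrite limD //; [apply: N0part_cvg | apply: Zpart_cvg].
Qed.

Lemma N0can0 : N0can 0 x = 0.
Proof. by rewrite N0canE N0part0 lim_cst. Qed.

Lemma mean_n0S K :
  mean_n0 K.+1 x = (1 - expR (- x * K.+1%:R)) * (1 + mean_n0 K x).
Proof.
rewrite /mean_n0 N0canS -(ZcanS K).
by field; rewrite (gt_eqF (Zcan_gt0 _)) gt_eqF // subr_gt0 weight_lt1.
Qed.

Lemma mean_n00 : mean_n0 0 x = 0.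
Proof. by rewrite /mean_n0 N0can0 mul0r. Qed.

End PartitionFunctions.

Section GroundOccupationRecursion.

Variables (R : realFieldType) (q : R) (g : nat -> R).
Hypotheses (q_ge0 : 0 <= q) (q_le1 : q <= 1) (g0 : g 0%N = 0)
  (gS : forall k, g k.+1 = (1 - q ^+ k.+1) * (1 + g k)).

Let qX_ge0 k : 0 <= q ^+ k. Proof. exact: exprn_ge0. Qed.
Let qX_le1 k : q ^+ k <= 1. Proof. exact: exprn_ile1. Qed.

Lemma occ_rec_ge0 K : 0 <= g K.
Proof.
elim: K => [|K IH]; first by rewrite g0.
by rewrite gS mulr_ge0 ?subr_ge0 //; lra.
Qed.

Lemma occ_rec_ub K : q ^+ K * g K <= 1 - q ^+ K.
Proof.
elim: K => [|K IH]; first by rewrite g0 expr0 mulr0 subrr.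
have qK1 := qX_le1 K.+1; rewrite gS exprS in qK1 *.
have w_ge0 : 0 <= q * (1 - q * q ^+ K) by rewrite mulr_ge0 // subr_ge0.
apply: le_trans (_ : q * (1 - q * q ^+ K) <= _).
  have -> : q * q ^+ K * ((1 - q * q ^+ K) * (1 + g K)) =
            q * (1 - q * q ^+ K) * (q ^+ K * (1 + g K)) by ring.
  by rewrite ler_piMr //; lra.
rewrite -subr_ge0.
have -> : 1 - q * q ^+ K - q * (1 - q * q ^+ K) = (1 - q) * (1 - q * q ^+ K) by ring.
by rewrite mulr_ge0 // subr_ge0.
Qed.

Lemma occ_rec_lb_from J i :
  (1 - q ^+ J) * (1 - (1 - q ^+ J) ^+ i) <= q ^+ J * g (J + i)%N.
Proof.
set s := q ^+ J; have s_ge0 : 0 <= s := qX_ge0 J; have s_le1 : s <= 1 := qX_le1 J.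
elim: i => [|i IH]; first by rewrite expr0 subrr mulr0 mulr_ge0 ?occ_rec_ge0.
have qJi : q ^+ (J + i).+1 <= s.
  by rewrite -addnS exprD ler_piMr ?qX_le1.
rewrite addnS gS exprS; set X := (1 - s) ^+ i in IH *.
have -> : (1 - s) * (1 - (1 - s) * X) = (1 - s) * (s + (1 - s) * (1 - X)) by ring.
apply: (@le_trans _ _ ((1 - s) * (s + s * g (J + i)%N))).
  by apply: ler_wpM2l; [lra | rewrite lerD2l].
have -> : (1 - s) * (s + s * g (J + i)%N) = s * ((1 - s) * (1 + g (J + i)%N)) by ring.
apply: ler_wpM2l => //; apply: ler_wpM2r; last by rewrite lerD2l lerN2.
by rewrite addr_ge0 ?occ_rec_ge0.
Qed.

Lemma occ_rec_lb K L :
  (q ^+ L - q ^+ K) * (1 - (1 - q ^+ K) ^+ L) <= q ^+ K * g K.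
Proof.
have [leLK|ltKL] := leqP L K; last first.
  apply: le_trans (mulr_ge0 (qX_ge0 K) (occ_rec_ge0 K)); rewrite mulr_le0_ge0 //.
    by rewrite subr_le0 -(subnKC (ltnW ltKL)) exprD ler_piMr.
  have := qX_le1 K; have := qX_ge0 K; move=> *.
  by rewrite subr_ge0 exprn_ile1 //; lra.
have := occ_rec_lb_from (K - L) L; rewrite subnK //.
have -> : q ^+ K = q ^+ (K - L) * q ^+ L by rewrite -exprD subnK.
set s := q ^+ (K - L); set p := q ^+ L => lb.
have s_le1 : s <= 1 := qX_le1 _; have p_le1 : p <= 1 := qX_le1 _.
have s_ge0 : 0 <= s := qX_ge0 _; have p_ge0 : 0 <= p := qX_ge0 _.
have Xle : (1 - s) ^+ L <= (1 - s * p) ^+ L by apply: lerXn2r; rewrite ?nnegrE; nra.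
apply: le_trans (_ : p * ((1 - s) * (1 - (1 - s) ^+ L)) <= _).
  have -> : p - s * p = p * (1 - s) by ring.
  rewrite -mulrA; apply: ler_wpM2l => //; apply: ler_wpM2l; first lra.
  by rewrite lerD2l lerN2.
by rewrite [s * p]mulrC -mulrA; apply: ler_wpM2l.
Qed.

End GroundOccupationRecursion.

Section ScaledMeanBounds.

Variables (R : realType) (x : R) (K : nat).
Hypothesis x_gt0 : 0 < x.

Let t := expR (- (x * K%:R)).
Let q := expR (- x).

Let qX k : q ^+ k = expR (- (x * k%:R)).
Proof. by rewrite -expRM_natr mulNr. Qed.

Let q_ge0 : 0 <= q. Proof. exact: expR_ge0. Qed.
Let q_le1 : q <= 1. Proof. by rewrite -expR0 ler_expR oppr_le0 ltW. Qed.
Let mean0 : mean_n0 0 x = 0. Proof. exact: mean_n00. Qed.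
Let meanS k : mean_n0 k.+1 x = (1 - q ^+ k.+1) * (1 + mean_n0 k x).
Proof. by rewrite mean_n0S // qX mulNr. Qed.

Lemma scaled_mean_n0_ge0 : 0 <= t * mean_n0 K x.
Proof.
by rewrite mulr_ge0 ?expR_ge0 // (occ_rec_ge0 _ _ (mean_n0^~ x) q_ge0 q_le1 mean0 meanS).
Qed.

Lemma scaled_mean_n0_ub : t * mean_n0 K x <= 1 - t.
Proof. by rewrite /t -qX (occ_rec_ub _ _ (mean_n0^~ x) q_ge0 q_le1 mean0 meanS). Qed.

Lemma scaled_mean_n0_lb L :
  (1 - x * L%:R - t) * (1 - expR (- (L%:R * t))) <= t * mean_n0 K x.
Proof.
have [A_le0|A_gt0] := lerP (1 - x * L%:R - t) 0.
  apply: le_trans scaled_mean_n0_ge0; rewrite mulr_le0_ge0 // subr_ge0.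
  by rewrite -expR0 ler_expR oppr_le0 mulr_ge0 ?expR_ge0.
have t_le1 : t <= 1 by rewrite /t -qX exprn_ile1.
have := occ_rec_lb _ _ (mean_n0^~ x) q_ge0 q_le1 mean0 meanS K L.
rewrite !qX -/t; apply: le_trans.
apply: ler_pM; first exact: ltW.
- by rewrite subr_ge0 -expR0 ler_expR oppr_le0 mulr_ge0 ?expR_ge0.
- by rewrite lerD2r; apply: expR_ge1Dx.
rewrite lerD2l lerN2 -mulrN (mulrC _ (- t)) expRM_natr.
apply: lerXn2r; rewrite ?nnegrE ?expR_ge0 ?subr_ge0 //.
exact: expR_ge1Dx.
Qed.

Lemma scaled_mean_n0_approx d :
  0 < d -> d <= 1 -> t <= d -> x <= d ^+ 2 * t -> `|1 - t * mean_n0 K x| <= 4 * d.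
Proof.
move=> d_gt0 d_le1 t_le x_le.
have t_gt0 : 0 < t := expR_gt0 _.
have dt_gt0 : 0 < d * t by rewrite mulr_gt0.
set L := (Num.truncn (d * t)^-1).+1.
have L_gt : (d * t)^-1 < L%:R by apply: truncnS_gt.
have L_le : L%:R <= (d * t)^-1 + 1.
  by rewrite -natr1 lerD2r truncn_le invr_ge0 ltW.
have Lt_ge : d^-1 <= L%:R * t.
  by rewrite -ler_pdivrMr // -invfM ltW.
have xL_le : x * L%:R <= 2 * d.
  have x_le_d : x <= d by apply: le_trans x_le _; rewrite expr2 -mulrA ler_piMr ?mulr_ge0 //; nra.
  apply: le_trans (ler_wpM2l (ltW x_gt0) L_le) _.
  have : x * (d * t)^-1 <= d.
    by rewrite ler_pdivrMr // (le_trans x_le) // expr2 mulrA.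
  lra.
have E_le : expR (- (L%:R * t)) <= d.
  rewrite expRN -[d]invrK lef_pV2 ?posrE ?expR_gt0 ?invr_gt0 //.
  apply: le_trans Lt_ge _; apply: le_trans (expR_ge1Dx _); lra.
have E_ge0 : 0 <= expR (- (L%:R * t)) := expR_ge0 _.
have lb := scaled_mean_n0_lb L; have ub := scaled_mean_n0_ub.
rewrite ler_norml; apply/andP; split; first lra.
have [A_ge0|A_lt0] := lerP 0 (1 - x * L%:R - t).
  have : (1 - x * L%:R - t) * (1 - d) <= (1 - x * L%:R - t) * (1 - expR (- (L%:R * t))).
    by apply: ler_wpM2l; lra.
  nra.
have : 1 - x * L%:R - t <= (1 - x * L%:R - t) * (1 - expR (- (L%:R * t))).
  nra.
lra.
Qed.

End ScaledMeanBounds.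

Lemma cvg_scaled_mean_n0 {R : realType} {T : Type} (F : set_system T) {FF : Filter F}
    (x : T -> R) (K : T -> nat) :
  (\forall s \near F, 0 < x s) ->
  (fun s => expR (- (x s * (K s)%:R))) @ F --> (0 : R) ->
  (fun s => x s / expR (- (x s * (K s)%:R))) @ F --> (0 : R) ->
  (fun s => expR (- (x s * (K s)%:R)) * mean_n0 (K s) (x s)) @ F --> (1 : R).
Proof.
move=> x_gt0 t_cvg0 r_cvg0; apply/cvgrPdist_le => eps eps_gt0.
pose d := Num.min (eps / 4) 1.
have d_gt0 : 0 < d by rewrite /d lt_min ltr01 andbT divr_gt0.
have d_le1 : d <= 1 by rewrite /d ge_min lexx orbT.
have d4_le : 4 * d <= eps by rewrite -ler_pdivlMl // /d ge_min mulrC lexx.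
have d2_gt0 : 0 < d ^+ 2 by rewrite exprn_gt0.
near=> s; apply: le_trans d4_le; apply: scaled_mean_n0_approx => //.
- by near: s.
- apply: le_trans (ler_norm _) _; near: s.
  exact: cvgr0_norm_le _ t_cvg0 _ d_gt0.
- rewrite -ler_pdivrMr ?expR_gt0 //; apply: le_trans (ler_norm _) _; near: s.
  exact: cvgr0_norm_le _ r_cvg0 _ d2_gt0.
Unshelve. all: by end_near.
Qed.

Lemma cvgr_ln_nat {R : realType} : (ln n%:R : R) @[n --> \oo] --> +oo.
Proof.
apply/cvgryPge => A; near=> n.
have n_ge : expR A <= n%:R by near: n; apply: nbhs_infty_ger.
by rewrite -(expRK A) ler_ln ?posrE ?expR_gt0 // (lt_le_trans (expR_gt0 A)).
Unshelve. all: by end_near.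
Qed.

Lemma mul_expRN_le {R : realType} (c y : R) :
  0 < c -> 0 < y -> y * expR (- (c * y)) <= 2 / c ^+ 2 * y^-1.
Proof.
move=> c_gt0 y_gt0; have cy_gt0 : 0 < c * y by rewrite mulr_gt0.
have := @expR_ge1Dxn _ (c * y) 1 (ltW cy_gt0); rewrite expRN.
set E := expR (c * y); have E_gt0 : 0 < E by apply: expR_gt0.
rewrite (_ : 2`!%:R = 2 :> R) // => E_ge; rewrite -subr_ge0.
have -> : 2 / c ^+ 2 * y^-1 - y * E^-1 = (2 * E - (c * y) ^+ 2) / (c ^+ 2 * y * E).
  by field; rewrite !gt_eqF.
by apply: divr_ge0; [lra | rewrite !mulr_ge0 // ltW].
Qed.

Lemma cvgr_mul_expRN {R : realType} (c : R) :
  0 < c -> y * expR (- (c * y)) @[y --> +oo] --> (0 : R).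
Proof.
move=> c_gt0; apply: (@squeeze_cvgr _ _ _ _ (fun=> 0) (fun y => 2 / c ^+ 2 * y^-1)).
- near=> y; have y_gt0 : 0 < y by near: y; apply: nbhs_pinfty_gt.
  by rewrite mulr_ge0 ?expR_ge0 ?(ltW y_gt0) //=; apply: mul_expRN_le.
- exact: cvg_cst.
rewrite -(mulr0 (2 / c ^+ 2)); apply: cvgMl_tmp.
by apply/gtr0_cvgV0; [near=> y; near: y; apply: nbhs_pinfty_gt | apply: cvg_id].
Unshelve. all: by end_near.
Qed.

Lemma cvgr_expRN_scale {R : realType} (c : R) :
  0 < c -> expR (- (c * y)) @[y --> +oo] --> (0 : R).
Proof.
move=> c_gt0.
have cy_cvgy : c * y @[y --> +oo] --> +oo by apply: gt0_cvgMry; last exact: cvg_id.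
exact: (cvg_comp _ (fun z => expR (- z)) cy_cvgy (@cvgr_expR R)).
Qed.

Section LogarithmicScaling.

Variables (R : realType) (a : R) (K : nat -> nat).
Hypotheses (a_gt0 : 0 < a) (a_lt1 : a < 1).

Local Notation x_ N := (a * ln (N%:R : R) / N%:R).
Local Notation t_ N := (expR (- (x_ N * (K N)%:R))).
Local Notation u_ N := (x_ N * (K N)%:R - a * ln (N%:R : R)).

Hypothesis u_cvg0 : (fun N => u_ N) @ \oo --> (0 : R).

Let lnN_cvgy : (fun N => ln (N%:R : R)) @ \oo --> +oo := cvgr_ln_nat.

Let expRu_cvg1 : (fun N => expR (u_ N)) @ \oo --> (1 : R).
Proof.
(* Naming the exponent lets [continuous_cvg] recognise the composite [expR \o u]. *)
pose u N := u_ N; change ((fun N => expR (u N)) @ \oo --> (1 : R)).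
by rewrite -expR0; apply: continuous_cvg => //; apply: continuous_expR.
Qed.

Let expRNu_cvg1 : (fun N => expR (- u_ N)) @ \oo --> (1 : R).
Proof.
pose u N := - u_ N; change ((fun N => expR (u N)) @ \oo --> (1 : R)).
have u0 : u @ \oo --> (0 : R) by rewrite -oppr0; apply: cvgN.
by rewrite -expR0; apply: continuous_cvg => //; apply: continuous_expR.
Qed.

Let N_gt0 : \forall N \near \oo, (0 < N%:R :> R).
Proof. exact: nbhs_infty_gtr. Qed.

Lemma scaled_weight_cvg0 : (fun N => t_ N) @ \oo --> (0 : R).
Proof.
have -> : (fun N => t_ N) = (fun N => expR (- u_ N) * expR (- (a * ln (N%:R : R)))).
  by apply/funext => N; rewrite -expRD; congr expR; ring.
rewrite -(mul1r 0); apply: cvgM => //.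
exact: (cvg_comp _ (fun z => expR (- (a * z))) lnN_cvgy (cvgr_expRN_scale _ a_gt0)).
Qed.

Lemma scale_over_weight_cvg0 : (fun N => x_ N / t_ N) @ \oo --> (0 : R).
Proof.
pose y N : R := ln N%:R.
have : (fun N => a * (y N * expR (- ((1 - a) * y N))) * expR (u_ N)) @ \oo --> (0 : R).
  rewrite -(mul0r 1) -(mulr0 a); apply: cvgM => //; apply: cvgMl_tmp.
  apply: (cvg_comp y (fun z => z * expR (- ((1 - a) * z))) lnN_cvgy).
  by apply: cvgr_mul_expRN; rewrite subr_gt0.
apply: cvg_trans; apply: near_eq_cvg; near=> N.
have NE : N%:R = expR (y N) by rewrite /y lnK //; near: N.
have xK : a * y N / N%:R * (K N)%:R = a * y N + u_ N by rewrite /y; ring.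
(* Freezing u keeps the rewrite with NE off the occurrences of N hidden in it. *)
rewrite -/(y N) expRN invrK xK; set v := u_ N.
by rewrite NE -expRN -!mulrA -!expRD; congr (_ * (_ * expR _)); ring.
Unshelve. all: by end_near.
Qed.

Lemma cvg_powRN_mean_n0 :
  (fun N => N%:R `^ (- a) * mean_n0 (K N) (x_ N)) @ \oo --> (1 : R).
Proof.
have x_gt0 : \forall N \near \oo, 0 < x_ N.
  near=> N; have N_gt1 : (1 < N)%N by near: N; apply: nbhs_infty_gt.
  by rewrite divr_gt0 ?mulr_gt0 ?ln_gt0 ?ltr1n ?ltr0n // ltnW.
have : (fun N => expR (u_ N) * (t_ N * mean_n0 (K N) (x_ N))) @ \oo --> (1 : R).
  rewrite -[X in _ --> X](mulr1 1); apply: cvgM => //.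
  exact: cvg_scaled_mean_n0 x_gt0 scaled_weight_cvg0 scale_over_weight_cvg0.
apply: cvg_trans; apply: near_eq_cvg; near=> N.
rewrite /powR gt_eqF //=; last by near: N.
by rewrite mulrA -expRD; congr (expR _ * _); ring.
Unshelve. all: by end_near.
Qed.

End LogarithmicScaling.

Theorem corollary3 (R : realType) (a : R) (S : nat -> int) :
  0 < a -> a < 1 ->
  (forall N : nat, 0 <= N%:Z + S N) ->
  (* S = o(N / ln N) *)
  (forall eps : R, 0 < eps ->
     \forall N \near \oo, `|(S N)%:~R| <= eps * (N%:R / ln N%:R)) ->
  (fun N : nat => N%:R `^ (- a) *
      mean_n0 (absz (N%:Z + S N)) (a * ln N%:R / N%:R)) @ \oo --> (1 : R).
Proof.
move=> a_gt0 a_lt1 NS_ge0 S_small; apply: cvg_powRN_mean_n0 => //.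
apply/cvgr0Pnorm_le => eps eps_gt0; near=> N.
have N_gt1 : (1 < N%:R :> R) by near: N; apply: nbhs_infty_gtr.
have N_gt0 : 0 < N%:R :> R by apply: lt_trans N_gt1.
have lnN_gt0 : 0 < ln (N%:R : R) by apply: ln_gt0.
have S_le : `|(S N)%:~R| <= eps / a * (N%:R / ln N%:R) :> R.
  by near: N; apply: S_small; rewrite divr_gt0.
have -> : a * ln N%:R / N%:R * (absz (N%:Z + S N))%:R - a * ln N%:R =
          a * ln N%:R / N%:R * (S N)%:~R :> R.
  by rewrite natr_absz ger0_norm // intrD /=; field; rewrite gt_eqF.
have c_ge0 : 0 <= a * ln N%:R / N%:R :> R by rewrite divr_ge0 ?mulr_ge0 ?ltW.
rewrite normrM ger0_norm //; apply: le_trans (ler_wpM2l c_ge0 S_le) _.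
suff -> : a * ln N%:R / N%:R * (eps / a * (N%:R / ln N%:R)) = eps :> R by [].
by field; rewrite !gt_eqF.
Unshelve. all: by end_near.
Qed.
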